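(* For every irreducible $*$-representation $\pi$ of $\mathcal{A}(\mathbb{C}P^2_q)$ by bounded operators on a Hilbert space, either $\ker\pi(p_{11})=\{0\}$, or $\pi(p_{11})=\pi(p_{12})=\pi(p_{13})=0$ (and hence also $\pi(p_{21})=\pi(p_{31})=0$).
   Context: Fix $0<q<1$. $\mathcal{A}(S^5_q)$ is the unital $*$-algebra generated by $z_1,z_2,z_3$ and adjoints with relations $z_iz_j=qz_jz_i$ ($i<j$), $z_i^*z_j=qz_jz_i^*$ ($i\ne j$), $[z_1^*,z_1]=0$, $[z_2^*,z_2]=(1-q^2)z_1z_1^*$, $[z_3^*,z_3]=(1-q^2)(z_1z_1^*+z_2z_2^* )$, $z_1z_1^*+z_2z_2^*+z_3z_3^*=1$. $\mathcal{A}(\mathbb{C}P^2_q)$ is the unital $*$-subalgebra generated by $p_{ij}:=z_i^*z_j$; note $p_{ij}^*=p_{ji}$. *)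

From Stdlib Require Import Reals.
Open Scope R_scope.

Record C := mkC { Cre : R; Cim : R }.
Definition C0 : C := mkC 0 0.
Definition C1 : C := mkC 1 0.
Definition CofR (r : R) : C := mkC r 0.
Definition Cadd (a b : C) : C := mkC (Cre a + Cre b) (Cim a + Cim b).
Definition Cmul (a b : C) : C :=
  mkC (Cre a * Cre b - Cim a * Cim b) (Cre a * Cim b + Cim a * Cre b).
Definition Cconj (a : C) : C := mkC (Cre a) (- Cim a).

(* inner product linear in the first argument, conjugate-linear in the second *)
Record Hilbert := {
  hV :> Type;
  hzero : hV;
  hadd : hV -> hV -> hV;
  hopp : hV -> hV;
  hscal : C -> hV -> hV;
  hinner : hV -> hV -> C;
  haddA : forall x y z, hadd x (hadd y z) = hadd (hadd x y) z;
  haddC : forall x y, hadd x y = hadd y x;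
  hadd0 : forall x, hadd x hzero = x;
  haddN : forall x, hadd x (hopp x) = hzero;
  hscal1 : forall x, hscal C1 x = x;
  hscalA : forall a b x, hscal a (hscal b x) = hscal (Cmul a b) x;
  hscalDr : forall a x y, hscal a (hadd x y) = hadd (hscal a x) (hscal a y);
  hscalDl : forall a b x, hscal (Cadd a b) x = hadd (hscal a x) (hscal b x);
  hinnerDl : forall x y z, hinner (hadd x y) z = Cadd (hinner x z) (hinner y z);
  hinnerZl : forall a x z, hinner (hscal a x) z = Cmul a (hinner x z);
  hinner_sym : forall x y, hinner y x = Cconj (hinner x y);
  hinner_pos : forall x, 0 <= Cre (hinner x x);
  hinner_def : forall x, hinner x x = C0 -> x = hzero;
  hcomplete : forall u : nat -> hV,
    (forall eps, 0 < eps -> exists N, forall m n, (N <= m)%nat -> (N <= n)%nat ->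
        sqrt (Cre (hinner (hadd (u m) (hopp (u n))) (hadd (u m) (hopp (u n))))) < eps) ->
    exists l, forall eps, 0 < eps -> exists N, forall n, (N <= n)%nat ->
        sqrt (Cre (hinner (hadd (u n) (hopp l)) (hadd (u n) (hopp l)))) < eps
}.

Arguments hzero {h}.

Definition hnorm {H : Hilbert} (x : H) : R := sqrt (Cre (hinner H x x)).
Definition hsub {H : Hilbert} (x y : H) : H := hadd H x (hopp H y).

Definition converges {H : Hilbert} (u : nat -> H) (l : H) : Prop :=
  forall eps, 0 < eps -> exists N, forall n, (N <= n)%nat -> hnorm (hsub (u n) l) < eps.

Definition bounded_op {H : Hilbert} (T : H -> H) : Prop :=
  (forall x y, T (hadd H x y) = hadd H (T x) (T y)) /\
  (forall a x, T (hscal H a x) = hscal H a (T x)) /\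
  (exists M, forall x, hnorm (T x) <= M * hnorm x).

Definition closed_subspace {H : Hilbert} (S : H -> Prop) : Prop :=
  S hzero /\ (forall x y, S x -> S y -> S (hadd H x y)) /\
  (forall a x, S x -> S (hscal H a x)) /\
  (forall u l, (forall n, S (u n)) -> converges u l -> S l).

Inductive idx := I1 | I2 | I3.

Inductive fterm (G : Type) :=
| FC : C -> fterm G
| FG : G -> fterm G
| FAdd : fterm G -> fterm G -> fterm G
| FMul : fterm G -> fterm G -> fterm G.
Arguments FC {G}. Arguments FG {G}. Arguments FAdd {G}. Arguments FMul {G}.

Inductive gen5 := Z (i : idx) | Zs (i : idx).
Definition gstar (g : gen5) : gen5 := match g with Z i => Zs i | Zs i => Z i end.

Fixpoint fstar (t : fterm gen5) : fterm gen5 :=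
  match t with
  | FC c => FC (Cconj c)
  | FG g => FG (gstar g)
  | FAdd a b => FAdd (fstar a) (fstar b)
  | FMul a b => FMul (fstar b) (fstar a)
  end.

Definition idx_lt (i j : idx) : Prop :=
  match i, j with I1, I2 | I1, I3 | I2, I3 => True | _, _ => False end.

(* S5eq q a b : a = b holds in A(S^5_q), i.e. the congruence generated by the
   complex *-algebra axioms and the defining relations (closed under * ). *)
Inductive S5eq (q : R) : fterm gen5 -> fterm gen5 -> Prop :=
| S5refl a : S5eq q a a
| S5sym a b : S5eq q a b -> S5eq q b a
| S5trans a b c : S5eq q a b -> S5eq q b c -> S5eq q a c
| S5addc a a' b b' : S5eq q a a' -> S5eq q b b' -> S5eq q (FAdd a b) (FAdd a' b')
| S5mulc a a' b b' : S5eq q a a' -> S5eq q b b' -> S5eq q (FMul a b) (FMul a' b')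
| S5starc a b : S5eq q a b -> S5eq q (fstar a) (fstar b)
| S5addA a b c : S5eq q (FAdd a (FAdd b c)) (FAdd (FAdd a b) c)
| S5addC a b : S5eq q (FAdd a b) (FAdd b a)
| S5add0 a : S5eq q (FAdd a (FC C0)) a
| S5addN a : S5eq q (FAdd a (FMul (FC (CofR (-1))) a)) (FC C0)
| S5mulA a b c : S5eq q (FMul a (FMul b c)) (FMul (FMul a b) c)
| S5mul1l a : S5eq q (FMul (FC C1) a) a
| S5mul1r a : S5eq q (FMul a (FC C1)) a
| S5mulDl a b c : S5eq q (FMul (FAdd a b) c) (FAdd (FMul a c) (FMul b c))
| S5mulDr a b c : S5eq q (FMul a (FAdd b c)) (FAdd (FMul a b) (FMul a c))
| S5cadd c d : S5eq q (FAdd (FC c) (FC d)) (FC (Cadd c d))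
| S5cmul c d : S5eq q (FMul (FC c) (FC d)) (FC (Cmul c d))
| S5ccomm c a : S5eq q (FMul (FC c) a) (FMul a (FC c))
| S5rel1 i j : idx_lt i j ->
    S5eq q (FMul (FG (Z i)) (FG (Z j))) (FMul (FC (CofR q)) (FMul (FG (Z j)) (FG (Z i))))
| S5rel2 i j : i <> j ->
    S5eq q (FMul (FG (Zs i)) (FG (Z j))) (FMul (FC (CofR q)) (FMul (FG (Z j)) (FG (Zs i))))
| S5rel3 : S5eq q (FMul (FG (Zs I1)) (FG (Z I1))) (FMul (FG (Z I1)) (FG (Zs I1)))
| S5rel4 : S5eq q (FMul (FG (Zs I2)) (FG (Z I2)))
    (FAdd (FMul (FG (Z I2)) (FG (Zs I2)))
          (FMul (FC (CofR (1 - q ^ 2))) (FMul (FG (Z I1)) (FG (Zs I1)))))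
| S5rel5 : S5eq q (FMul (FG (Zs I3)) (FG (Z I3)))
    (FAdd (FMul (FG (Z I3)) (FG (Zs I3)))
          (FMul (FC (CofR (1 - q ^ 2)))
                (FAdd (FMul (FG (Z I1)) (FG (Zs I1))) (FMul (FG (Z I2)) (FG (Zs I2))))))
| S5rel6 : S5eq q (FAdd (FAdd (FMul (FG (Z I1)) (FG (Zs I1))) (FMul (FG (Z I2)) (FG (Zs I2))))
                        (FMul (FG (Z I3)) (FG (Zs I3)))) (FC C1).

(* ---------- A(CP^2_q): polynomials in the p_ij = z_i^* z_j ---------- *)
Definition genP := (idx * idx)%type.

Fixpoint iotaP (t : fterm genP) : fterm gen5 :=
  match t with
  | FC c => FC c
  | FG (i, j) => FMul (FG (Zs i)) (FG (Z j))
  | FAdd a b => FAdd (iotaP a) (iotaP b)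
  | FMul a b => FMul (iotaP a) (iotaP b)
  end.

Fixpoint evalP {H : Hilbert} (P : idx -> idx -> H -> H) (t : fterm genP) (x : H) : H :=
  match t with
  | FC c => hscal H c x
  | FG (i, j) => P i j x
  | FAdd a b => hadd H (evalP P a x) (evalP P b x)
  | FMul a b => evalP P a (evalP P b x)
  end.

(* A unital *-representation of A(CP^2_q) by bounded operators on H, given by
   the images pi i j := pi(p_ij) of the generators: well defined on the
   subalgebra (polynomials equal in A(S^5_q) have equal images), bounded, and
   *-preserving (pi(p_ij)^* = pi(p_ji), as p_ij^* = p_ji). *)
Record CP2rep (q : R) (H : Hilbert) := {
  rpi : idx -> idx -> H -> H;
  rpi_bounded : forall i j, bounded_op (rpi i j);
  rpi_star : forall i j (x y : H),
    hinner H (rpi i j x) y = hinner H x (rpi j i y);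
  rpi_wd : forall f g, S5eq q (iotaP f) (iotaP g) ->
    forall x, evalP rpi f x = evalP rpi g x
}.
Arguments rpi {q H}.

(* irreducible: the only closed subspaces invariant under pi(A(CP^2_q))
   (equivalently under all pi(p_ij)) are {0} and H *)
Definition irreducible {q : R} {H : Hilbert} (pi : CP2rep q H) : Prop :=
  forall S : H -> Prop, closed_subspace S ->
    (forall i j x, S x -> S (rpi pi i j x)) ->
    (forall x, S x -> x = hzero) \/ (forall x, S x).

(* In A(S^5_q) both z_1 and z_1^* q-commute with every generator
   g, with the same factor lambda(g) (1 for z_1, z_1^*; q for z_j; 1/q for
   z_j^*, j = 2, 3).  Hence p_11 = z_1^* z_1 q-commutes with each generator
   with factor lambda(g)^2, and with every p_ij:  p_11 p_ij = kappa_ij p_ij p_11.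
   Consequently ker pi(p_11) is invariant under all pi(p_ij); it is closed since
   pi(p_11) is bounded, so by irreducibility it is {0} or the whole space.  In
   the second case pi(p_11) = 0, and the relation p_j1 p_1j = kappa p_jj p_11
   (obtained from z_1 z_1^* = z_1^* z_1) gives pi(p_j1) pi(p_1j) = 0; since
   pi(p_j1) is the adjoint of pi(p_1j), this forces pi(p_1j) = 0 and then
   pi(p_j1) = 0. *)

From Pilot Require Import Defs.
From Stdlib Require Import Reals Lra Setoid.
Open Scope R_scope.
Local Notation C := Defs.C.
Local Notation Z := Defs.Z.
Local Notation C0 := Defs.C0.
Local Notation C1 := Defs.C1.

Lemma Cext (a b : C) : Cre a = Cre b -> Cim a = Cim b -> a = b.
Proof. destruct a, b; simpl; intros; subst; reflexivity. Qed.

Lemma Cconj_CofR (r : R) : Cconj (CofR r) = CofR r.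
Proof. apply Cext; simpl; lra. Qed.

Lemma Cmul_CofR (r s : R) : Cmul (CofR r) (CofR s) = CofR (r * s).
Proof. apply Cext; simpl; ring. Qed.

Section S5Algebra.
Variable q : R.
Hypothesis q_neq0 : q <> 0.

Add Parametric Relation : (fterm gen5) (S5eq q)
  reflexivity proved by (S5refl q)
  symmetry proved by (S5sym q)
  transitivity proved by (S5trans q) as S5eq_rel.

Add Parametric Morphism : (@FMul gen5)
  with signature S5eq q ==> S5eq q ==> S5eq q as FMul_S5eq.
Proof. intros; apply S5mulc; assumption. Qed.

Local Notation "a ≡ b" := (S5eq q a b) (at level 70).
Local Notation "a ⋅ b" := (FMul a b) (at level 40, left associativity).
Local Notation sc r := (FC (CofR r)).
Local Notation z i := (FG (Z i)).
Local Notation zs i := (FG (Zs i)).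

Lemma mul_scalar_r (a : fterm gen5) (k : C) (b : fterm gen5) :
  a ⋅ (FC k ⋅ b) ≡ FC k ⋅ (a ⋅ b).
Proof.
  rewrite (S5mulA q), <- (S5ccomm q k a). symmetry. apply S5mulA.
Qed.

Lemma mul_scalars (r s : R) (a : fterm gen5) : sc r ⋅ (sc s ⋅ a) ≡ sc (r * s) ⋅ a.
Proof. rewrite (S5mulA q), (S5cmul q), Cmul_CofR. reflexivity. Qed.

Lemma scalar_inverse (r : R) (a b : fterm gen5) : r <> 0 ->
  a ≡ sc r ⋅ b -> b ≡ sc (/ r) ⋅ a.
Proof.
  intros hr ->. rewrite mul_scalars, Rinv_l by exact hr. symmetry. apply S5mul1l.
Qed.

(* The adjoint of z_i z_j = q z_j z_i:  z_j^* z_i^* = q z_i^* z_j^*  (i < j). *)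
Lemma rel_zs_zs (i j : idx) : idx_lt i j -> zs j ⋅ zs i ≡ sc q ⋅ (zs i ⋅ zs j).
Proof.
  intro hij. pose proof (S5starc q _ _ (S5rel1 q i j hij)) as E.
  cbn [fstar gstar] in E. rewrite Cconj_CofR in E. rewrite E. symmetry. apply S5ccomm.
Qed.

Definition qcommutes (a b : fterm gen5) (r : R) : Prop := a ⋅ b ≡ sc r ⋅ (b ⋅ a).

Lemma qcommutes_of_comm (a b : fterm gen5) : a ⋅ b ≡ b ⋅ a -> qcommutes a b 1.
Proof. unfold qcommutes. intro E. rewrite E. symmetry. apply S5mul1l. Qed.

Lemma qcommutes_inv (a b : fterm gen5) (r : R) : r <> 0 ->
  qcommutes a b r -> qcommutes b a (/ r).
Proof. unfold qcommutes. intros hr E. apply scalar_inverse; assumption. Qed.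

Lemma qcommutes_mul_l (u x y : fterm gen5) (r s : R) :
  qcommutes u y r -> qcommutes x y s -> qcommutes (u ⋅ x) y (r * s).
Proof.
  unfold qcommutes. intros Eu Ex.
  rewrite <- (S5mulA q u x y), Ex, mul_scalar_r, (S5mulA q u y x), Eu.
  rewrite <- (S5mulA q (sc r) (y ⋅ u) x), mul_scalars, <- (S5mulA q y u x).
  rewrite Rmult_comm. reflexivity.
Qed.

Lemma qcommutes_mul_r (x u v : fterm gen5) (r s : R) :
  qcommutes x u r -> qcommutes x v s -> qcommutes x (u ⋅ v) (r * s).
Proof.
  unfold qcommutes. intros Eu Ev.
  rewrite (S5mulA q x u v), Eu, <- (S5mulA q (sc r) (u ⋅ x) v).
  rewrite <- (S5mulA q u x v), Ev, mul_scalar_r, mul_scalars, (S5mulA q u v x).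
  reflexivity.
Qed.

Definition lambda (g : gen5) : R :=
  match g with
  | Z I1 | Zs I1 => 1
  | Z _ => q
  | Zs _ => / q
  end.

Lemma z1_qcommutes (g : gen5) : qcommutes (z I1) (FG g) (lambda g).
Proof.
  destruct g as [[| |]|[| |]]; simpl lambda.
  - apply qcommutes_of_comm. reflexivity.
  - apply S5rel1. exact I.
  - apply S5rel1. exact I.
  - apply qcommutes_of_comm. symmetry. apply S5rel3.
  - apply qcommutes_inv; [exact q_neq0|]. apply S5rel2. discriminate.
  - apply qcommutes_inv; [exact q_neq0|]. apply S5rel2. discriminate.
Qed.

Lemma zs1_qcommutes (g : gen5) : qcommutes (zs I1) (FG g) (lambda g).
Proof.
  destruct g as [[| |]|[| |]]; simpl lambda.
  - apply qcommutes_of_comm. apply S5rel3.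
  - apply S5rel2. discriminate.
  - apply S5rel2. discriminate.
  - apply qcommutes_of_comm. reflexivity.
  - apply qcommutes_inv; [exact q_neq0|]. apply rel_zs_zs. exact I.
  - apply qcommutes_inv; [exact q_neq0|]. apply rel_zs_zs. exact I.
Qed.

Definition p11 : fterm gen5 := zs I1 ⋅ z I1.

Lemma p11_qcommutes (g : gen5) : qcommutes p11 (FG g) (lambda g * lambda g).
Proof. apply qcommutes_mul_l; [apply zs1_qcommutes | apply z1_qcommutes]. Qed.

Definition kappa (i j : idx) : R :=
  lambda (Zs i) * lambda (Zs i) * (lambda (Z j) * lambda (Z j)).

Lemma p11_pij (i j : idx) :
  iotaP (FMul (FG (I1, I1)) (FG (i, j)))
  ≡ iotaP (FMul (FMul (FC (CofR (kappa i j))) (FG (i, j))) (FG (I1, I1))).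
Proof.
  cbn [iotaP]. fold p11.
  rewrite (qcommutes_mul_r _ _ _ _ _ (p11_qcommutes (Zs i)) (p11_qcommutes (Z j))).
  apply S5mulA.
Qed.

(* In A(CP^2_q): p_j1 p_1j = kappa_1j p_jj p_11, using z_1 z_1^* = z_1^* z_1. *)
Lemma pj1_p1j (j : idx) :
  iotaP (FMul (FG (j, I1)) (FG (I1, j)))
  ≡ iotaP (FMul (FMul (FC (CofR (kappa I1 j))) (FG (j, j))) (FG (I1, I1))).
Proof.
  cbn [iotaP]. unfold kappa; simpl lambda at 1 2.
  rewrite !Rmult_1_l.
  rewrite <- (S5mulA q (zs j) (z I1) (zs I1 ⋅ z j)), (S5mulA q (z I1) (zs I1) (z j)).
  rewrite <- (S5rel3 q). fold p11. rewrite (p11_qcommutes (Z j)), mul_scalar_r.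
  rewrite (S5mulA q (zs j) (z j) p11), (S5mulA q). reflexivity.
Qed.

End S5Algebra.

Section HilbertFacts.
Variable V : Hilbert.

Lemma hadd_idem_zero (x : V) : hadd V x x = x -> x = hzero.
Proof.
  intro E.
  assert (E' : hadd V (hadd V x x) (hopp V x) = hadd V x (hopp V x)) by now rewrite E.
  now rewrite <- haddA, haddN, hadd0 in E'.
Qed.

Lemma hscal_zero (a : C) : hscal V a hzero = hzero.
Proof. apply hadd_idem_zero. now rewrite <- hscalDr, hadd0. Qed.

Lemma additive_zero (T : V -> V) :
  (forall x y, T (hadd V x y) = hadd V (T x) (T y)) -> T hzero = hzero.
Proof. intro HT. apply hadd_idem_zero. now rewrite <- HT, hadd0. Qed.

Lemma hscal_C0 (x : V) : hscal V C0 x = hzero.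
Proof.
  apply hadd_idem_zero. rewrite <- hscalDl.
  replace (Cadd C0 C0) with C0 by (apply Cext; simpl; ring). reflexivity.
Qed.

Lemma hopp_scal (x : V) : hopp V x = hscal V (CofR (-1)) x.
Proof.
  assert (E : hadd V (hscal V (CofR (-1)) x) x = hzero).
  { rewrite <- (hscal1 V x) at 2. rewrite <- hscalDl.
    replace (Cadd (CofR (-1)) C1) with C0 by (apply Cext; simpl; ring).
    apply hscal_C0. }
  rewrite <- (hadd0 V (hopp V x)), <- E, (haddC V _ x), haddA, (haddC V (hopp V x) x).
  now rewrite haddN, haddC, hadd0.
Qed.

Lemma hnorm_nonneg (x : V) : 0 <= hnorm x.
Proof. apply sqrt_pos. Qed.

Lemma hnorm_scal_m1 (x : V) : hnorm (hscal V (CofR (-1)) x) = hnorm x.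
Proof.
  unfold hnorm. f_equal.
  rewrite hinnerZl, (hinner_sym V (hscal V (CofR (-1)) x) x), hinnerZl.
  destruct (hinner V x x); simpl; ring.
Qed.

(* A vector whose squared norm vanishes is zero (the imaginary part of
   <y, y> vanishes by conjugate symmetry). *)
Lemma inner_self_zero (y : V) : Cre (hinner V y y) = 0 -> y = hzero.
Proof.
  intro h. apply hinner_def. pose proof (hinner_sym V y y) as S.
  destruct (hinner V y y) as [a b]. simpl in *.
  injection S as S. apply Cext; simpl; lra.
Qed.

Lemma hnorm_zero (y : V) : hnorm y = 0 -> y = hzero.
Proof. intro h. apply inner_self_zero, sqrt_eq_0; [apply hinner_pos | exact h]. Qed.

Lemma hinner_zero_r (x : V) : hinner V x hzero = C0.
Proof.
  assert (h : hinner V hzero x = C0).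
  { pose proof (hinnerDl V hzero hzero x) as E. rewrite hadd0 in E.
    destruct (hinner V hzero x) as [a b]. unfold Cadd in E; simpl in E.
    injection E as E1 E2. apply Cext; simpl; lra. }
  rewrite (hinner_sym V hzero x), h. apply Cext; simpl; lra.
Qed.

(* If T x = 0 along a sequence converging to l, then ||T l|| <= M ||x_n - l||
   for every n, so T l = 0: the kernel of a bounded operator is closed. *)
Lemma kernel_limit (T : V -> V) (u : nat -> V) (l : V) : bounded_op T ->
  (forall n, T (u n) = hzero) -> converges u l -> T l = hzero.
Proof.
  intros [Hadd [Hscal [M HM]]] Hu Hc.
  assert (bound : forall n, hnorm (T l) <= M * hnorm (hsub (u n) l)).
  { intro n.
    assert (E : T (hsub (u n) l) = hscal V (CofR (-1)) (T l)).
    { unfold hsub. now rewrite Hadd, Hu, haddC, hadd0, hopp_scal, Hscal. }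
    rewrite <- hnorm_scal_m1, <- E. apply HM. }
  apply hnorm_zero.
  destruct (Rle_lt_or_eq_dec 0 _ (hnorm_nonneg (T l))) as [pos|]; [exfalso|auto].
  set (e := hnorm (T l) / (Rabs M + 1)).
  assert (hM : M <= Rabs M) by apply Rle_abs.
  assert (hM0 : 0 <= Rabs M) by apply Rabs_pos.
  assert (epos : 0 < e) by (unfold e; apply Rdiv_lt_0_compat; lra).
  assert (he : (Rabs M + 1) * e = hnorm (T l)) by (unfold e; field; lra).
  destruct (Hc e epos) as [N HN].
  specialize (HN N (le_n N)). specialize (bound N).
  pose proof (hnorm_nonneg (hsub (u N) l)).
  nra.
Qed.

Lemma kernel_closed (T : V -> V) : bounded_op T ->
  closed_subspace (fun x => T x = hzero).
Proof.
  intro HT. pose proof HT as [Hadd [Hscal _]].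
  split; [|split; [|split]].
  - exact (additive_zero T Hadd).
  - intros x y hx hy. rewrite Hadd, hx, hy. apply hadd0.
  - intros a x hx. rewrite Hscal, hx. apply hscal_zero.
  - intros u l hu hc. exact (kernel_limit T u l HT hu hc).
Qed.

(* If S is the adjoint of T and S T = 0, then ||T y||^2 = <y, S T y> = 0. *)
Lemma adjoint_annihilates (T S : V -> V) :
  (forall x y, hinner V (T x) y = hinner V x (S y)) ->
  (forall y, S (T y) = hzero) -> forall y, T y = hzero.
Proof.
  intros Hadj HST y. apply inner_self_zero.
  now rewrite Hadj, HST, hinner_zero_r.
Qed.

End HilbertFacts.

Section Representation.
Variables (q : R) (H : Hilbert) (pi : CP2rep q H).
Hypothesis q_neq0 : q <> 0.

Lemma rep_zero (i j : idx) : rpi pi i j hzero = hzero.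
Proof. apply additive_zero, (rpi_bounded _ _ pi i j). Qed.

(* By p_11 p_ij = kappa_ij p_ij p_11, ker pi(p_11) is invariant under every
   pi(p_ij). *)
Lemma p11_kernel_invariant (i j : idx) (x : H) :
  rpi pi I1 I1 x = hzero -> rpi pi I1 I1 (rpi pi i j x) = hzero.
Proof.
  intro Hx. pose proof (rpi_wd _ _ pi _ _ (p11_pij q q_neq0 i j) x) as E.
  cbn [evalP] in E. rewrite E, Hx, rep_zero. apply hscal_zero.
Qed.

(* If pi(p_11) = 0, then pi(p_j1) pi(p_1j) = kappa pi(p_jj) pi(p_11) = 0, so
   pi(p_1j) = 0 since pi(p_j1) is its adjoint; then also pi(p_j1) = 0. *)
Lemma p11_zero_kills_row (j : idx) :
  (forall x, rpi pi I1 I1 x = hzero) ->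
  forall y, rpi pi I1 j y = hzero /\ rpi pi j I1 y = hzero.
Proof.
  intro Hp11.
  assert (row : forall y, rpi pi I1 j y = hzero).
  { apply (adjoint_annihilates H _ (rpi pi j I1) (rpi_star _ _ pi I1 j)).
    intro y. pose proof (rpi_wd _ _ pi _ _ (pj1_p1j q q_neq0 j) y) as E.
    cbn [evalP] in E. rewrite E, Hp11, rep_zero. apply hscal_zero. }
  intro y. split; [apply row|].
  apply (adjoint_annihilates H _ (rpi pi I1 j) (rpi_star _ _ pi j I1)).
  intro z. apply row.
Qed.

End Representation.

Theorem lemmaD2 (q : R) (hq : 0 < q < 1) (H : Hilbert) (pi : CP2rep q H) :
  irreducible pi ->
  (forall x : H, rpi pi I1 I1 x = hzero -> x = hzero) \/
  (forall x : H, rpi pi I1 I1 x = hzero /\ rpi pi I1 I2 x = hzero /\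
                 rpi pi I1 I3 x = hzero /\ rpi pi I2 I1 x = hzero /\
                 rpi pi I3 I1 x = hzero).
Proof.
  intro Hirr.
  assert (q_neq0 : q <> 0) by lra.
  destruct (Hirr _ (kernel_closed H _ (rpi_bounded _ _ pi I1 I1))
                 (fun i j x => p11_kernel_invariant q H pi q_neq0 i j x))
    as [trivial_kernel | p11_zero].
  - left. exact trivial_kernel.
  - right. intro x.
    destruct (p11_zero_kills_row q H pi q_neq0 I2 p11_zero x).
    destruct (p11_zero_kills_row q H pi q_neq0 I3 p11_zero x).
    auto.
Qed.
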